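(* Let $s,t\in\mathbb{R}$ with $s\ne0$, $t\ne0$, $s^2+4t>0$, and $q=\varphi'_{s,t}/\varphi_{s,t}$. (1) If $\lvert q\rvert<1$, then on the disk of convergence of its series, $\mathrm{Exp}_{s,t}(z)=\prod_{k=0}^\infty\frac{\varphi_{s,t}^{k+1}}{\varphi_{s,t}^{k+1}-(\varphi_{s,t}-\varphi'_{s,t})\varphi_{s,t}'^{\,k}z}$, and this product gives the meromorphic continuation of $\mathrm{Exp}_{s,t}$ to $\mathbb{C}$. (2) If $\lvert q\rvert>1$, then $\mathrm{Exp}_{s,t}(z)=\prod_{k=0}^\infty\Big(1-(\varphi_{s,t}-\varphi'_{s,t})\frac{\varphi_{s,t}^{k}}{\varphi_{s,t}'^{\,k+1}}z\Big)$.
   Context: $\varphi_{s,t}=\frac{s+\sqrt{s^2+4t}}{2}$, $\varphi'_{s,t}=\frac{s-\sqrt{s^2+4t}}{2}$. Generalized Fibonacci polynomials: $\{0\}_{s,t}=0$, $\{1\}_{s,t}=1$, $\{n+2\}_{s,t}=s\{n+1\}_{s,t}+t\{n\}_{s,t}$; Fibotorial $\{n\}_{s,t}!=\prod_{k=1}^n\{k\}_{s,t}$, $\{0\}_{s,t}!=1$. $\mathrm{Exp}_{s,t}(z)=\sum_{n=0}^\infty\varphi_{s,t}^{\binom n2}\frac{z^n}{\{n\}_{s,t}!}$. *)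

From Stdlib Require Import Reals.
From Coquelicot Require Import Coquelicot.
Open Scope R_scope.

Definition phi (s t : R) : R := (s + sqrt (s ^ 2 + 4 * t)) / 2.
Definition phi' (s t : R) : R := (s - sqrt (s ^ 2 + 4 * t)) / 2.

Fixpoint fibst (s t : R) (n : nat) : R :=
  match n with
  | O => 0
  | S O => 1
  | S ((S m) as p) => s * fibst s t p + t * fibst s t m
  end.

Fixpoint fibotorial (s t : R) (n : nat) : R :=
  match n with
  | O => 1
  | S m => fibotorial s t m * fibst s t (S m)
  end.

(* real coefficient of z^n in Exp_{s,t}: phi^{binom n 2} / {n}! *)
Definition Exp_coef (s t : R) (n : nat) : R :=
  phi s t ^ (n * (n - 1) / 2) / fibotorial s t n.

Fixpoint Cpow (z : C) (n : nat) : C :=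
  match n with
  | O => RtoC 1
  | S m => Cmult (Cpow z m) z
  end.

Definition Exp_term (s t : R) (z : C) (n : nat) : C :=
  Cmult (RtoC (Exp_coef s t n)) (Cpow z n).

Fixpoint Cprod (f : nat -> C) (N : nat) : C :=
  match N with
  | O => RtoC 1
  | S m => Cmult (Cprod f m) (f m)
  end.

Definition is_inf_prod (f : nat -> C) (L : C) : Prop :=
  filterlim (fun N => Cprod f N) eventually (locally L).

Definition in_disk_of_conv (a : nat -> R) (z : C) : Prop :=
  exists r : R, Cmod z < r /\ exists M : R, forall n, Rabs (a n) * r ^ n <= M.

Definition C_holo_at (f : C -> C) (z : C) : Prop :=
  @ex_derive C_AbsRing C_NormedModule f z.

(* P is meromorphic on C with (discrete) exceptional set Z: holomorphic off Z,
   and every point of Z is isolated in Z and is a pole or removable singularity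
   (i.e. (z - w)^m P z extends holomorphically across w for some m). *)
Definition meromorphic_on_C (P : C -> C) (Z : C -> Prop) : Prop :=
  (forall z, ~ Z z -> C_holo_at P z) /\
  (forall w, Z w ->
     exists r : R, 0 < r /\
       (forall z, 0 < Cmod (Cminus z w) < r -> ~ Z z) /\
       exists (m : nat) (g : C -> C),
         (forall z, Cmod (Cminus z w) < r -> C_holo_at g z) /\
         (forall z, 0 < Cmod (Cminus z w) < r ->
            g z = Cmult (Cpow (Cminus z w) m) (P z))).

Definition denom1 (s t : R) (z : C) (k : nat) : C :=
  Cminus (RtoC (phi s t ^ (S k)))
         (Cmult (RtoC ((phi s t - phi' s t) * phi' s t ^ k)) z).
Definition factor1 (s t : R) (z : C) (k : nat) : C :=
  Cdiv (RtoC (phi s t ^ (S k))) (denom1 s t z k).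

Definition poles1 (s t : R) (z : C) : Prop := exists k : nat, denom1 s t z k = RtoC 0.

Definition factor2 (s t : R) (z : C) (k : nat) : C :=
  Cminus (RtoC 1)
         (Cmult (RtoC ((phi s t - phi' s t) * (phi s t ^ k / phi' s t ^ (S k)))) z).

(* Exp_{s,t} has coefficients a_n with a_(n+1) {n+1} = phi^n a_n, and Binet's formula
   {n} (phi - phi') = phi^n - phi'^n turns this into a q-recurrence
   a_(n+1) (1 - q^(n+1)) = c a_n r^n, either with q = phi'/phi, c = 1 - q, r = 1, or with
   q = phi/phi', c = 1 - q, r = q; one of the two ratios has modulus < 1.  For |q| < 1 and |r| <= 1
   the recurrence gives |a_n| <= K^n, so the sum S of the series is holomorphic near 0 with S(0) = 1,
   and comparing coefficients gives S(w) - S(q w) = c w S(r w).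
   For r = 1 this reads S(q w) = (1 - c w) S(w), hence
   S(z) = prod_(k<N) 1/(1 - c q^k z) * S(q^N z) with S(q^N z) -> 1.  Once q^N z is small the
   right-hand side makes sense for every z: it is the value of the infinite product, and near any
   point it exhibits the product as finitely many simple-pole factors times a holomorphic function.
   For r = q it reads S(w) = (1 + c w) S(q w); the ratio test makes S entire, and the same
   iteration gives the product. *)

From Stdlib Require Import Reals Lra Lia ClassicalEpsilon Classical.
From Coquelicot Require Import Coquelicot.
Open Scope R_scope.

Lemma Cmod_Cpow (z : C) n : Cmod (Cpow z n) = Cmod z ^ n.
Proof. induction n; simpl; [apply Cmod_1 | rewrite Cmod_mult, IHn; ring]. Qed.

Lemma Cpow_Cmult (a b : C) n : Cpow (a * b) n = (Cpow a n * Cpow b n)%C.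
Proof. induction n; simpl; [ring | rewrite IHn; ring]. Qed.

Lemma Cpow_RtoC (x : R) n : Cpow (RtoC x) n = RtoC (x ^ n).
Proof. induction n; simpl; [reflexivity | rewrite IHn, <- RtoC_mult; f_equal; ring]. Qed.

Lemma Cmod_RtoC_pow_mult (q : R) n (z : C) : Cmod (RtoC (q ^ n) * z) = Rabs q ^ n * Cmod z.
Proof. rewrite Cmod_mult, Cmod_R, RPow_abs. reflexivity. Qed.

Lemma Cinv_0 : Cinv 0 = 0%C.
Proof. unfold Cinv, RtoC; simpl. unfold Rdiv. apply injective_projections; simpl; ring. Qed.

Lemma RtoC_neq_0 x : x <> 0 -> RtoC x <> 0%C.
Proof. intros H E. apply H. apply (f_equal fst) in E. exact E. Qed.

Lemma Cmod_sub_ge (x y : C) : Cmod x - Cmod y <= Cmod (x - y).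
Proof.
  pose proof (Cmod_triangle (x - y) y). replace (x - y + y)%C with x in H by ring. lra.
Qed.

Lemma Cmod_sub_ge' (x y : C) : Cmod y - Cmod x <= Cmod (x - y).
Proof.
  rewrite <- (Cmod_opp (x - y)). replace (- (x - y))%C with (y - x)%C by ring. apply Cmod_sub_ge.
Qed.

Lemma Cmod_sub_diag (z : C) : Cmod (z - z) = 0.
Proof. replace (z - z)%C with (RtoC 0) by ring. apply Cmod_0. Qed.

Lemma Cmod_le_center (y z0 : C) (rad : R) : Cmod (y - z0) < rad -> Cmod y <= Cmod z0 + rad.
Proof. intros H. pose proof (Cmod_sub_ge y z0). lra. Qed.

Lemma Cminus_neq_0_of_Cmod_lt (X : C) : Cmod X < 1 -> (1 - X)%C <> 0%C.
Proof.
  intros H E. assert (X = RtoC 1) by (replace X with (RtoC 1 - (RtoC 1 - X))%C by ring; rewrite E; ring).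
  subst X. rewrite Cmod_1 in H. lra.
Qed.

Lemma filterlim_C_eps (u : nat -> C) (l : C) :
  filterlim u eventually (locally l) <->
  (forall eps, 0 < eps -> exists N, forall n, (N <= n)%nat -> Cmod (u n - l) < eps).
Proof.
  rewrite filterlim_locally_ball_norm. split.
  - intros H eps Heps. exact (H (mkposreal eps Heps)).
  - intros H eps. exact (H eps (cond_pos eps)).
Qed.

Lemma filterlim_C_shift (u : nat -> C) (l : C) N0 :
  filterlim (fun M => u (N0 + M)%nat) eventually (locally l) -> filterlim u eventually (locally l).
Proof.
  rewrite !filterlim_C_eps. intros H eps He. destruct (H eps He) as [N HN]. exists (N0 + N)%nat.
  intros n Hn. replace n with (N0 + (n - N0))%nat by lia. apply HN. lia.
Qed.

Lemma filterlim_C_scal (u : nat -> C) (L k : C) : filterlim u eventually (locally L) ->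
  filterlim (fun n => k * u n)%C eventually (locally (k * L)%C).
Proof.
  intros H. apply (filterlim_comp _ _ _ u (fun z => k * z)%C _ _ _ H).
  exact (@filterlim_scal_r C_AbsRing C_NormedModule k L).
Qed.

Lemma filterlim_C_pow_scal (q : R) (w : C) : Rabs q < 1 ->
  filterlim (fun N => RtoC (q ^ N) * w)%C eventually (locally (RtoC 0)).
Proof.
  intros Hq. apply filterlim_C_eps. intros eps He.
  assert (Hw : 0 < Cmod w + 1) by (pose proof (Cmod_ge_0 w); lra).
  destruct (pow_lt_1_zero q Hq (eps / (Cmod w + 1))) as [N HN]; [apply Rdiv_lt_0_compat; lra |].
  exists N. intros n Hn.
  replace (RtoC (q ^ n) * w - RtoC 0)%C with (RtoC (q ^ n) * w)%C by ring. rewrite Cmod_RtoC_pow_mult.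
  specialize (HN n Hn). rewrite <- RPow_abs in HN. pose proof (Cmod_ge_0 w).
  apply (Rmult_lt_compat_r (Cmod w + 1)) in HN; [| lra].
  unfold Rdiv in HN. rewrite Rmult_assoc, Rinv_l in HN by lra.
  assert (0 <= Rabs q ^ n) by (apply pow_le, Rabs_pos). nra.
Qed.

Lemma pow_scal_eventually_small (q B eps : R) : Rabs q < 1 -> 0 < eps ->
  exists N, forall n y, (N <= n)%nat -> Cmod y <= B -> Cmod (RtoC (q ^ n) * y) < eps.
Proof.
  intros Hq He. destruct (proj1 (filterlim_C_eps _ _) (filterlim_C_pow_scal q (RtoC B) Hq) eps He) as [N HN].
  exists N. intros n y Hn Hy. specialize (HN n Hn).
  replace (RtoC (q ^ n) * RtoC B - RtoC 0)%C with (RtoC (q ^ n) * RtoC B)%C in HN by ring.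
  rewrite Cmod_RtoC_pow_mult, Cmod_R in HN. rewrite Cmod_RtoC_pow_mult.
  assert (0 <= Rabs q ^ n) by (apply pow_le, Rabs_pos). pose proof (Rle_abs B). nra.
Qed.

(* Coquelicot gives [C] two normed-module structures that are not convertible: [C_holo_at] uses
   [C_NormedModule], the generic derivative rules produce [AbsRing_NormedModule C_AbsRing]. *)
Lemma is_derive_C_to_AbsRing f x df : @is_derive C_AbsRing C_NormedModule f x df ->
  @is_derive C_AbsRing (AbsRing_NormedModule C_AbsRing) f x df.
Proof. intros [[a b [M HM]] H2]. split; [split; [exact a | exact b | exists M; exact HM] | exact H2]. Qed.

Lemma is_derive_AbsRing_to_C f x df : @is_derive C_AbsRing (AbsRing_NormedModule C_AbsRing) f x df ->
  @is_derive C_AbsRing C_NormedModule f x df.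
Proof. intros [[a b [M HM]] H2]. split; [split; [exact a | exact b | exists M; exact HM] | exact H2]. Qed.

Lemma is_derive_C_quadratic_remainder (f : C -> C) (x l : C) (d M : R) : 0 < d ->
  (forall y, Cmod (y - x) < d -> Cmod (f y - f x - (y - x) * l) <= M * Cmod (y - x) ^ 2) ->
  @is_derive C_AbsRing C_NormedModule f x l.
Proof.
  intros Hd H. split; [apply is_linear_scal_l |].
  intros x' Hx'.
  apply (@is_filter_lim_locally_unique C_AbsRing (AbsRing_NormedModule C_AbsRing)) in Hx'. subst x'.
  intros eps. pose proof (cond_pos eps). pose proof (Rabs_pos M).
  set (e := Rmin d (eps / (Rabs M + 1))).
  assert (He : 0 < e) by (apply Rmin_pos; [lra | apply Rdiv_lt_0_compat; lra]).
  eapply filter_imp;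
    [| apply (@locally_ball_norm C_AbsRing (AbsRing_NormedModule C_AbsRing) x (mkposreal e He))].
  intros y Hy. change (Cmod (y - x) < e) in Hy.
  change (Cmod (f y - f x - (y - x) * l) <= eps * Cmod (y - x)).
  assert (h1 : Cmod (y - x) < d) by (eapply Rlt_le_trans; [apply Hy | apply Rmin_l]).
  assert (h2 : Cmod (y - x) * (Rabs M + 1) <= eps).
  { assert (Cmod (y - x) <= eps / (Rabs M + 1)) by (left; eapply Rlt_le_trans; [apply Hy | apply Rmin_r]).
    apply (Rmult_le_compat_r (Rabs M + 1)) in H2; [| lra].
    unfold Rdiv in H2. rewrite Rmult_assoc, Rinv_l in H2; lra. }
  eapply Rle_trans; [apply H; exact h1 |].
  pose proof (Cmod_ge_0 (y - x)). pose proof (Rle_abs M). nra.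
Qed.

Lemma C_holo_at_const (a x : C) : C_holo_at (fun _ => a) x.
Proof. exists zero. apply is_derive_const. Qed.

Lemma C_holo_at_mult (f g : C -> C) x : C_holo_at f x -> C_holo_at g x ->
  C_holo_at (fun z => f z * g z)%C x.
Proof.
  intros [df Hf] [dg Hg]. eexists. apply is_derive_AbsRing_to_C.
  exact (is_derive_mult f g x df dg (is_derive_C_to_AbsRing _ _ _ Hf)
           (is_derive_C_to_AbsRing _ _ _ Hg) Cmult_comm).
Qed.

Lemma C_holo_at_Cprod (F : C -> nat -> C) N x :
  (forall k, (k < N)%nat -> C_holo_at (fun z => F z k) x) ->
  C_holo_at (fun z => Cprod (F z) N) x.
Proof.
  induction N; intros H; simpl; [apply C_holo_at_const |].
  apply C_holo_at_mult; [apply IHN; intros; apply H |apply H]; lia.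
Qed.

Lemma C_holo_at_comp_scal (f : C -> C) (a x : C) : C_holo_at f (a * x)%C ->
  C_holo_at (fun z => f (a * z))%C x.
Proof.
  intros [df Hf]. exists (a * df)%C.
  apply (is_derive_comp f (fun z => a * z)%C x df a Hf).
  apply (is_derive_ext (V := AbsRing_NormedModule C_AbsRing) (fun z => scal z a));
    [intros z; apply Cmult_comm |].
  pose proof (is_derive_scal_l (V := AbsRing_NormedModule C_AbsRing) _ x _ a (is_derive_id x)) as H.
  rewrite scal_one in H. exact H.
Qed.

Lemma C_holo_at_ext_ball (f g : C -> C) x rad : 0 < rad ->
  (forall y, Cmod (y - x) < rad -> f y = g y) -> C_holo_at f x -> C_holo_at g x.
Proof.
  intros Hr H. apply ex_derive_ext_loc.
  eapply filter_imp;
    [| apply (@locally_ball_norm C_AbsRing (AbsRing_NormedModule C_AbsRing) x (mkposreal rad Hr))].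
  intros y Hy. apply H. exact Hy.
Qed.

Lemma C_holo_at_inv_affine (b x : C) : (1 - b * x)%C <> 0%C ->
  C_holo_at (fun z => / (1 - b * z))%C x.
Proof.
  intros Hx. set (u := (1 - b * x)%C).
  assert (Hu : 0 < Cmod u) by (apply Cmod_gt_0; exact Hx).
  pose proof (Cmod_ge_0 b) as Hb.
  exists (b / (u * u))%C.
  apply (is_derive_C_quadratic_remainder _ _ _ (Cmod u / (2 * (Cmod b + 1))) (2 * Cmod b ^ 2 / Cmod u ^ 3));
    [apply Rdiv_lt_0_compat; lra |].
  intros y Hy. set (h := (y - x)%C) in *. pose proof (Cmod_ge_0 h).
  assert (Ey : (1 - b * y)%C = (u - b * h)%C) by (unfold u, h; ring).
  assert (Hv : Cmod u / 2 <= Cmod (1 - b * y)%C).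
  { assert (Cmod b * Cmod h * (2 * (Cmod b + 1)) <= Cmod u * Cmod b).
    { apply (Rmult_lt_compat_r (2 * (Cmod b + 1))) in Hy; [| lra].
      unfold Rdiv in Hy. rewrite Rmult_assoc, Rinv_l in Hy by lra. nra. }
    rewrite Ey. pose proof (Cmod_sub_ge u (b * h)). rewrite Cmod_mult in H1. nra. }
  assert (Hv0 : (1 - b * y)%C <> 0%C) by (intro Z; rewrite Z, Cmod_0 in Hv; lra).
  cbv beta. fold u.
  replace (/ (1 - b * y) - / u - h * (b / (u * u)))%C with (b * b * h * h / ((1 - b * y) * u * u))%C
    by (rewrite Ey in *; field; auto).
  rewrite Cmod_div by (repeat apply Cmult_neq_0; auto).
  rewrite !Cmod_mult.
  apply (Rmult_le_reg_r (Cmod (1 - b * y)%C * Cmod u * Cmod u)); [apply Rmult_lt_0_compat; nra |].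
  unfold Rdiv. rewrite Rmult_assoc, Rinv_l by (apply Rgt_not_eq, Rmult_lt_0_compat; nra).
  replace (2 * Cmod b ^ 2 * / Cmod u ^ 3 * Cmod h ^ 2 * (Cmod (1 - b * y)%C * Cmod u * Cmod u))
    with (Cmod b ^ 2 * Cmod h ^ 2 * (2 * Cmod (1 - b * y)%C / Cmod u)) by (field; lra).
  assert (1 <= 2 * Cmod (1 - b * y)%C / Cmod u).
  { apply (Rmult_le_reg_r (Cmod u)); auto. unfold Rdiv. rewrite Rmult_assoc, Rinv_l; lra. }
  assert (0 <= Cmod b ^ 2 * Cmod h ^ 2) by (apply Rmult_le_pos; apply pow2_ge_0).
  nra.
Qed.

Lemma is_series_C_unique (u : nat -> C) l1 l2 : is_series u l1 -> is_series u l2 -> l1 = l2.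
Proof. apply filterlim_locally_unique. Qed.

Lemma is_series_C_Cmod_le (u : nat -> C) (b : nat -> R) l B :
  is_series u l -> (forall n, Cmod (u n) <= b n) -> is_series b B -> Cmod l <= B.
Proof.
  intros Hu Hb HB.
  assert (Hp : forall N, Cmod (sum_n u N) <= sum_n b N).
  { induction N; [rewrite !sum_O; apply Hb |].
    rewrite !sum_Sn. eapply Rle_trans; [apply Cmod_triangle |].
    pose proof (Hb (S N)). change (Cmod (sum_n u N) + Cmod (u (S N)) <= sum_n b N + b (S N)). lra. }
  assert (Hl : is_lim_seq (fun N => Cmod (sum_n u N)) (Cmod l))
    by (eapply filterlim_comp; [exact Hu | exact (filterlim_norm (K := C_AbsRing) (V := C_NormedModule) l)]).
  exact (is_lim_seq_le _ _ _ _ Hp Hl (HB : is_lim_seq (sum_n b) B)).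
Qed.

(** * Power series with real coefficients *)

Definition pser_term (a : nat -> R) (w : C) (n : nat) : C := (RtoC (a n) * Cpow w n)%C.

Definition pser_abs_conv (a : nat -> R) (w : C) : Prop :=
  ex_series (fun n => Rabs (a n) * Cmod w ^ n).

(* [epsilon] picks the sum when the series converges, an unspecified value otherwise. *)
Definition pser_sum (a : nat -> R) (w : C) : C :=
  epsilon (inhabits (RtoC 0)) (is_series (pser_term a w)).

Lemma pser_sum_spec a w : pser_abs_conv a w -> is_series (pser_term a w) (pser_sum a w).
Proof.
  intros H. unfold pser_sum. apply epsilon_spec.
  apply (ex_series_le (V := C_CompleteNormedModule) _ (fun n => Rabs (a n) * Cmod w ^ n)); [| exact H].
  intros n. change (Cmod (pser_term a w n) <= Rabs (a n) * Cmod w ^ n).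
  unfold pser_term. rewrite Cmod_mult, Cmod_R, Cmod_Cpow. lra.
Qed.

Lemma pser_abs_conv_le a w v : pser_abs_conv a w -> Cmod v <= Cmod w -> pser_abs_conv a v.
Proof.
  intros H Hv.
  apply (ex_series_le (V := R_CompleteNormedModule) _ (fun n => Rabs (a n) * Cmod w ^ n)); [| exact H].
  intros n. pose proof (Cmod_ge_0 v). pose proof (Rabs_pos (a n)).
  assert (Cmod v ^ n <= Cmod w ^ n) by (apply pow_incr; lra).
  change (Rabs (Rabs (a n) * Cmod v ^ n) <= Rabs (a n) * Cmod w ^ n).
  rewrite Rabs_pos_eq by (apply Rmult_le_pos; [lra | apply pow_le; lra]).
  apply Rmult_le_compat_l; lra.
Qed.

Lemma Rabs_pow_le_1 (q : R) k : Rabs q <= 1 -> Rabs (q ^ k) <= 1.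
Proof. intros Hq. rewrite <- RPow_abs, <- (pow1 k). apply pow_incr. split; [apply Rabs_pos | exact Hq]. Qed.

Lemma pow_S_le (Q : R) d : 0 <= Q <= 1 -> Q ^ S d <= Q.
Proof.
  intros HQ. simpl. assert (Q ^ d <= 1) by (rewrite <- (pow1 d); apply pow_incr; lra).
  assert (0 <= Q ^ d) by (apply pow_le; lra). nra.
Qed.

Lemma pser_abs_conv_scal a (x : R) z : Rabs x <= 1 -> pser_abs_conv a z ->
  pser_abs_conv a (RtoC x * z)%C.
Proof.
  intros Hx H. apply (pser_abs_conv_le a z); [exact H |].
  rewrite Cmod_mult, Cmod_R. pose proof (Cmod_ge_0 z). nra.
Qed.

Lemma pser_abs_conv_in_disk a z : in_disk_of_conv a z -> pser_abs_conv a z.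
Proof.
  intros [r [Hr [M HM]]]. pose proof (Cmod_ge_0 z). assert (Hr0 : 0 < r) by lra.
  apply (ex_series_le (V := R_CompleteNormedModule) _ (fun n => M * (Cmod z / r) ^ n)).
  - intros n. change (Rabs (Rabs (a n) * Cmod z ^ n) <= M * (Cmod z / r) ^ n).
    rewrite Rabs_pos_eq by (apply Rmult_le_pos; [apply Rabs_pos | apply pow_le; lra]).
    unfold Rdiv. rewrite Rpow_mult_distr, pow_inv.
    assert (0 < r ^ n) by (apply pow_lt; lra).
    apply (Rmult_le_reg_r (r ^ n)); [lra |].
    replace (M * (Cmod z ^ n * / r ^ n) * r ^ n) with (M * Cmod z ^ n) by (field; lra).
    replace (Rabs (a n) * Cmod z ^ n * r ^ n) with (Rabs (a n) * r ^ n * Cmod z ^ n) by ring.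
    apply Rmult_le_compat_r; [apply pow_le; lra | apply HM].
  - apply (ex_series_scal_l (V := R_NormedModule)), ex_series_geom.
    rewrite Rabs_pos_eq by (apply Rdiv_le_0_compat; lra).
    apply (Rmult_lt_reg_r r); [lra |]. unfold Rdiv. rewrite Rmult_assoc, Rinv_l; lra.
Qed.

Lemma INR_sqr_le_pow2 n : INR n <= INR n ^ 2 <= 4 * 2 ^ n.
Proof.
  assert (Hnat : (n * n <= 4 * 2 ^ n /\ 2 * n + 1 <= 4 * 2 ^ n)%nat).
  { induction n as [| n IH]; [simpl; lia |]. rewrite Nat.pow_succ_r'. nia. }
  destruct Hnat as [Hnat _]. apply le_INR in Hnat.
  rewrite !mult_INR, pow_INR in Hnat.
  replace (INR 4) with 4 in Hnat by (simpl; ring). replace (INR 2) with 2 in Hnat by (simpl; ring).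
  split; [| simpl; lra].
  destruct n; [simpl; lra |]. assert (1 <= INR (S n)) by (apply (le_INR 1); lia). nra.
Qed.

Lemma Cpow_second_order_bound (x y : C) n (rho : R) : 0 < rho -> Cmod x <= rho -> Cmod y <= rho ->
  rho ^ 2 * Cmod (Cpow y n - Cpow x n - RtoC (INR n) * Cpow x (pred n) * (y - x))
    <= INR n ^ 2 * rho ^ n * Cmod (y - x) ^ 2.
Proof.
  intros Hr Hx Hy. pose proof (Cmod_ge_0 (y - x)). set (h := Cmod (y - x)) in *.
  induction n as [| n IH].
  { simpl. replace (1 - 1 - RtoC 0 * 1 * (y - x))%C with (RtoC 0) by ring. rewrite Cmod_0. lra. }
  set (D := (Cpow y n - Cpow x n - RtoC (INR n) * Cpow x (pred n) * (y - x))%C) in IH.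
  replace (Cpow y (S n) - Cpow x (S n) - RtoC (INR (S n)) * Cpow x (pred (S n)) * (y - x))%C
    with (y * D + RtoC (INR n) * Cpow x (pred n) * (y - x) * (y - x))%C
    by (unfold D; destruct n; simpl pred; simpl Cpow; rewrite ?S_INR, ?RtoC_plus; simpl INR; ring).
  eapply Rle_trans; [apply Rmult_le_compat_l; [apply pow_le; lra | apply Cmod_triangle] |].
  rewrite !Cmod_mult, Cmod_R, Cmod_Cpow, Rabs_pos_eq by apply pos_INR. fold h.
  pose proof (pos_INR n). pose proof (Cmod_ge_0 D). pose proof (pow_le rho n).
  assert (E1 : rho ^ 2 * (Cmod y * Cmod D) <= rho * (INR n ^ 2 * rho ^ n * h ^ 2)).
  { replace (rho ^ 2 * (Cmod y * Cmod D)) with (Cmod y * (rho ^ 2 * Cmod D)) by ring.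
    apply Rmult_le_compat; try lra. apply Cmod_ge_0. apply Rmult_le_pos; [apply pow_le |]; lra. }
  assert (E2 : rho ^ 2 * (INR n * Cmod x ^ pred n * h * h) <= INR n * (rho * rho ^ n) * h ^ 2).
  { destruct n as [| m]; [simpl; lra |]. simpl pred.
    assert (Cmod x ^ m <= rho ^ m) by (apply pow_incr; split; [apply Cmod_ge_0 | lra]).
    replace (INR (S m) * (rho * rho ^ S m) * h ^ 2) with (rho ^ 2 * (INR (S m) * rho ^ m * h * h))
      by (simpl; ring).
    apply Rmult_le_compat_l; [apply pow_le; lra |].
    apply Rmult_le_compat_r; [lra |]. apply Rmult_le_compat_r; [lra |].
    apply Rmult_le_compat_l; lra. }
  assert (0 <= rho * rho ^ n * h ^ 2) by (apply Rmult_le_pos; [apply Rmult_le_pos |]; nra).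
  assert (0 <= INR n * (rho * rho ^ n * h ^ 2)) by (apply Rmult_le_pos; lra).
  rewrite S_INR. simpl pow in *. nra.
Qed.

Definition pser_deriv_term (a : nat -> R) (x : C) (n : nat) : C :=
  (RtoC (a n * INR n) * Cpow x (pred n))%C.

Definition pser_deriv_sum (a : nat -> R) (x : C) : C :=
  epsilon (inhabits (RtoC 0)) (is_series (pser_deriv_term a x)).

Lemma is_series_geom_half (k : R) : is_series (fun n => 4 * (/ 2) ^ n * k) (8 * k).
Proof.
  pose proof (is_series_geom (/ 2)) as H. rewrite Rabs_pos_eq in H by lra.
  specialize (H ltac:(lra)). replace (/ (1 - / 2)) with 2 in H by field.
  apply (is_series_ext (fun n => scal (4 * k) ((/ 2) ^ n)));
    [intros n; change (4 * k * (/ 2) ^ n = 4 * (/ 2) ^ n * k); ring |].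
  replace (8 * k) with (scal (4 * k) 2) by (change (4 * k * 2 = 8 * k); ring).
  apply (is_series_scal_l (V := R_NormedModule)), H.
Qed.

Definition geom_radius (K : R) : R := / (4 * K).

Section GeometricBound.

Variables (a : nat -> R) (K : R).
Hypothesis HK : 0 < K.
Hypothesis Ha : forall n, Rabs (a n) <= K ^ n.

Let rho := geom_radius K.

Lemma geom_radius_pos : 0 < rho.
Proof. unfold rho, geom_radius. apply Rinv_0_lt_compat. lra. Qed.

Lemma geom_radius_mult : K * rho = / 4.
Proof. unfold rho, geom_radius. field. lra. Qed.

Lemma geom_term_bound (w : C) n (m : R) : Cmod w <= m * rho ->
  Rabs (a n) * Cmod w ^ n <= (m / 4) ^ n.
Proof.
  intros Hw. pose proof (Cmod_ge_0 w).
  apply Rle_trans with (K ^ n * (m * rho) ^ n);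
    [apply Rmult_le_compat; [apply Rabs_pos | apply pow_le; lra | apply Ha | apply pow_incr; lra] |].
  rewrite <- Rpow_mult_distr. replace (K * (m * rho)) with (m * (K * rho)) by ring.
  rewrite geom_radius_mult. reflexivity.
Qed.

Lemma geom_abs_conv (w : C) : Cmod w <= 2 * rho -> pser_abs_conv a w.
Proof.
  intros Hw. apply (ex_series_le (V := R_CompleteNormedModule) _ (fun n => (2 / 4) ^ n)).
  - intros n. change (Rabs (Rabs (a n) * Cmod w ^ n) <= (2 / 4) ^ n).
    rewrite Rabs_pos_eq by (apply Rmult_le_pos; [apply Rabs_pos | apply pow_le, Cmod_ge_0]).
    apply geom_term_bound, Hw.
  - apply ex_series_geom. rewrite Rabs_pos_eq; lra.
Qed.

Lemma geom_deriv_term_bound (x : C) n : Cmod x <= rho ->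
  Cmod (pser_deriv_term a x n) <= 4 * (/ 2) ^ n / rho.
Proof.
  intros Hx. pose proof geom_radius_pos. pose proof geom_radius_mult. pose proof (INR_sqr_le_pow2 n).
  unfold pser_deriv_term.
  rewrite Cmod_mult, Cmod_R, Cmod_Cpow, Rabs_mult, (Rabs_pos_eq (INR n)) by apply pos_INR.
  apply (Rmult_le_reg_l rho); [lra |].
  replace (rho * (4 * (/ 2) ^ n / rho)) with (4 * (/ 2) ^ n) by (field; lra).
  destruct n as [| m]; [simpl; lra |]. simpl pred.
  apply Rle_trans with (rho * (K ^ S m * INR (S m) * rho ^ m)).
  { apply Rmult_le_compat_l; [lra |].
    apply Rmult_le_compat;
      [apply Rmult_le_pos; [apply Rabs_pos | apply pos_INR] | apply pow_le, Cmod_ge_0 | |].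
    - apply Rmult_le_compat_r; [apply pos_INR | apply Ha].
    - apply pow_incr. split; [apply Cmod_ge_0 | exact Hx]. }
  replace (rho * (K ^ S m * INR (S m) * rho ^ m)) with (INR (S m) * (K * rho) ^ S m)
    by (rewrite Rpow_mult_distr; simpl; ring).
  rewrite H0. replace ((/ 2) ^ S m) with (2 ^ S m * (/ 4) ^ S m)
    by (rewrite <- Rpow_mult_distr; f_equal; lra).
  assert (0 < (/ 4) ^ S m) by (apply pow_lt; lra). nra.
Qed.

Lemma geom_deriv_spec (x : C) : Cmod x <= rho ->
  is_series (pser_deriv_term a x) (pser_deriv_sum a x).
Proof.
  intros Hx. unfold pser_deriv_sum. apply epsilon_spec.
  apply (ex_series_le (V := C_CompleteNormedModule) _ (fun n => 4 * (/ 2) ^ n * / rho));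
    [intros n; exact (geom_deriv_term_bound x n Hx) |].
  eexists. apply is_series_geom_half.
Qed.

Lemma geom_sum_quadratic (x y : C) : Cmod x < rho -> Cmod (y - x) < rho - Cmod x ->
  Cmod (pser_sum a y - pser_sum a x - (y - x) * pser_deriv_sum a x)
    <= 8 / rho ^ 2 * Cmod (y - x) ^ 2.
Proof.
  intros Hx Hy. pose proof geom_radius_pos. pose proof geom_radius_mult.
  pose proof (Cmod_sub_ge y x).
  assert (Hrho2 : 0 < rho ^ 2) by (apply pow_lt; lra).
  pose proof (Cmod_ge_0 (y - x)). set (h := Cmod (y - x)) in *.
  pose proof (is_series_minus _ _ _ _ (pser_sum_spec a y (geom_abs_conv y ltac:(lra)))
                (pser_sum_spec a x (geom_abs_conv x ltac:(lra)))) as Hyx.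
  pose proof (is_series_minus _ _ _ _ Hyx
                (is_series_scal_l (V := C_NormedModule) (y - x)%C _ _ (geom_deriv_spec x ltac:(lra)))) as H3.
  replace (8 / rho ^ 2 * h ^ 2) with (8 * (h ^ 2 / rho ^ 2)) by (field; lra).
  apply (is_series_C_Cmod_le _ (fun n => 4 * (/ 2) ^ n * (h ^ 2 / rho ^ 2)) _ _ H3);
    [| apply is_series_geom_half].
  intros n. change (Cmod (pser_term a y n - pser_term a x n - (y - x) * pser_deriv_term a x n)%C
                      <= 4 * (/ 2) ^ n * (h ^ 2 / rho ^ 2)).
  replace (pser_term a y n - pser_term a x n - (y - x) * pser_deriv_term a x n)%C
    with (RtoC (a n) * (Cpow y n - Cpow x n - RtoC (INR n) * Cpow x (pred n) * (y - x)))%C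
    by (unfold pser_term, pser_deriv_term; rewrite RtoC_mult; ring).
  rewrite Cmod_mult, Cmod_R.
  pose proof (Cpow_second_order_bound x y n rho ltac:(lra) ltac:(lra) ltac:(lra)) as HD. fold h in HD.
  pose proof (INR_sqr_le_pow2 n) as Hn.
  apply (Rmult_le_reg_r (rho ^ 2)); [lra |].
  replace (4 * (/ 2) ^ n * (h ^ 2 / rho ^ 2) * rho ^ 2) with (4 * (/ 2) ^ n * h ^ 2) by (field; lra).
  apply Rle_trans with (K ^ n * (INR n ^ 2 * rho ^ n * h ^ 2)).
  { rewrite Rmult_assoc, (Rmult_comm (Cmod _)).
    apply Rmult_le_compat; [apply Rabs_pos | apply Rmult_le_pos; [lra | apply Cmod_ge_0] | | exact HD].
    apply Ha. }
  replace (K ^ n * (INR n ^ 2 * rho ^ n * h ^ 2)) with (INR n ^ 2 * (K * rho) ^ n * h ^ 2)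
    by (rewrite Rpow_mult_distr; ring).
  rewrite H0. replace ((/ 2) ^ n) with (2 ^ n * (/ 4) ^ n) by (rewrite <- Rpow_mult_distr; f_equal; lra).
  assert (0 < (/ 4) ^ n) by (apply pow_lt; lra).
  assert (0 <= (/ 4) ^ n * h ^ 2) by (apply Rmult_le_pos; [lra | apply pow2_ge_0]). nra.
Qed.

Lemma geom_sum_holo (x : C) : Cmod x < rho -> C_holo_at (pser_sum a) x.
Proof.
  intros Hx. exists (pser_deriv_sum a x).
  apply (is_derive_C_quadratic_remainder _ _ _ (rho - Cmod x) (8 / rho ^ 2)); [lra |].
  intros y Hy. apply geom_sum_quadratic; assumption.
Qed.

Lemma geom_sum_0 : pser_sum a (RtoC 0) = RtoC (a 0%nat).
Proof.
  pose proof geom_radius_pos.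
  apply (is_series_C_unique (pser_term a (RtoC 0)));
    [apply pser_sum_spec, geom_abs_conv; rewrite Cmod_0; lra |].
  apply filterlim_C_eps. intros eps Heps. exists 0%nat. intros n _.
  change (Cmod (sum_n (pser_term a (RtoC 0)) n - RtoC (a 0%nat)) < eps).
  replace (sum_n (pser_term a (RtoC 0)) n) with (RtoC (a 0%nat)).
  { replace (RtoC (a 0%nat) - RtoC (a 0%nat))%C with (RtoC 0) by ring. rewrite Cmod_0. lra. }
  induction n; [rewrite sum_O; unfold pser_term; simpl; ring |].
  rewrite sum_Sn, <- IHn. unfold pser_term. simpl Cpow.
  change (RtoC (a 0%nat) = RtoC (a 0%nat) + RtoC (a (S n)) * (Cpow (RtoC 0) n * RtoC 0))%C. ring.
Qed.

Lemma geom_sum_pow_scal_lim (q : R) (w : C) : Rabs q < 1 ->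
  filterlim (fun N => pser_sum a (RtoC (q ^ N) * w)%C) eventually (locally (RtoC (a 0%nat))).
Proof.
  intros Hq. rewrite <- geom_sum_0.
  assert (Hc := ex_derive_continuous (K := C_AbsRing) (V := C_NormedModule) (pser_sum a) (RtoC 0)).
  eapply filterlim_comp; [| apply Hc, geom_sum_holo; rewrite Cmod_0; apply geom_radius_pos].
  (* [locally_C] identifies the product-metric and the [Cmod]-metric neighbourhoods in [C] *)
  intros P HP. apply (filterlim_C_pow_scal q w Hq). apply locally_C. exact HP.
Qed.

End GeometricBound.

(** * q-recurrent coefficients *)

Definition q_recurrent (a : nat -> R) (q c r : R) : Prop :=
  a 0%nat = 1 /\ forall n, a (S n) * (1 - q ^ S n) = c * a n * r ^ n.

Definition q_recurrent_const (q c : R) : R := Rabs c / (1 - Rabs q) + 1.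

Section QRecurrenceConst.

Variables (q c : R).
Hypothesis Hq : Rabs q < 1.

Let K := q_recurrent_const q c.
Let rho := geom_radius K.

Lemma q_recurrent_const_ge_1 : 1 <= K.
Proof.
  assert (0 <= Rabs c / (1 - Rabs q)) by (apply Rdiv_le_0_compat; [apply Rabs_pos | lra]).
  unfold K, q_recurrent_const. lra.
Qed.

Lemma q_recurrent_radius_pos : 0 < rho.
Proof. apply geom_radius_pos. pose proof q_recurrent_const_ge_1. lra. Qed.

Lemma q_recurrent_small_factor : Rabs c * (2 * rho) < 1.
Proof.
  pose proof q_recurrent_const_ge_1. pose proof q_recurrent_radius_pos.
  assert (Hmult : K * rho = / 4) by (apply geom_radius_mult; lra).
  assert (Rabs c <= Rabs c / (1 - Rabs q)).
  { apply (Rmult_le_reg_r (1 - Rabs q)); [lra |].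
    replace (Rabs c / (1 - Rabs q) * (1 - Rabs q)) with (Rabs c) by (field; lra).
    pose proof (Rabs_pos c). pose proof (Rabs_pos q). nra. }
  assert (Rabs c * rho < K * rho) by (apply Rmult_lt_compat_r; [lra | unfold K, q_recurrent_const; lra]).
  lra.
Qed.

End QRecurrenceConst.

Section QRecurrence.

Variables (a : nat -> R) (q c r : R).
Hypothesis Ha : q_recurrent a q c r.
Hypothesis Hq : Rabs q < 1.
Hypothesis Hr : Rabs r <= 1.

Let K := q_recurrent_const q c.

Lemma q_recurrent_step_bound n :
  Rabs (a (S n)) <= Rabs c / (1 - Rabs q) * Rabs (a n) * Rabs r ^ n.
Proof.
  destruct Ha as [_ Hrec]. pose proof (Rabs_pos q).
  assert (H1 : 1 - Rabs q <= Rabs (1 - q ^ S n)).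
  { pose proof (Rabs_triang_inv 1 (q ^ S n)). rewrite Rabs_R1, <- RPow_abs in H0.
    pose proof (pow_S_le (Rabs q) n ltac:(lra)). lra. }
  apply (Rmult_le_reg_r (1 - Rabs q)); [lra |].
  replace (Rabs c / (1 - Rabs q) * Rabs (a n) * Rabs r ^ n * (1 - Rabs q))
    with (Rabs (c * a n * r ^ n)) by (rewrite !Rabs_mult, RPow_abs; field; lra).
  rewrite <- Hrec, Rabs_mult. apply Rmult_le_compat_l; [apply Rabs_pos | exact H1].
Qed.

Lemma q_recurrent_coef_bound n : Rabs (a n) <= K ^ n.
Proof.
  destruct Ha as [Ha0 _].
  assert (Hc : 0 <= Rabs c / (1 - Rabs q)) by (apply Rdiv_le_0_compat; [apply Rabs_pos | lra]).
  induction n as [| n IH]; [rewrite Ha0, Rabs_R1; simpl; lra |].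
  pose proof (q_recurrent_step_bound n). pose proof (Rabs_pos (a n)).
  assert (Rabs r ^ n <= 1) by (rewrite RPow_abs; apply Rabs_pow_le_1, Hr).
  assert (0 <= Rabs r ^ n) by (apply pow_le, Rabs_pos).
  assert (Rabs (a (S n)) <= Rabs c / (1 - Rabs q) * Rabs (a n)).
  { eapply Rle_trans; [exact H |]. rewrite <- (Rmult_1_r (Rabs c / (1 - Rabs q) * Rabs (a n))) at 2.
    apply Rmult_le_compat_l; [apply Rmult_le_pos |]; lra. }
  unfold K, q_recurrent_const in *. simpl. nra.
Qed.

Let K_pos : 0 < K.
Proof. pose proof (q_recurrent_const_ge_1 q c Hq). unfold K. lra. Qed.

Let rho := geom_radius K.

Lemma q_recurrent_abs_conv w : Cmod w <= 2 * rho -> pser_abs_conv a w.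
Proof.
  apply geom_abs_conv; [exact K_pos | apply q_recurrent_coef_bound].
Qed.

Lemma q_recurrent_sum_holo x : Cmod x < rho -> C_holo_at (pser_sum a) x.
Proof.
  apply geom_sum_holo; [exact K_pos | apply q_recurrent_coef_bound].
Qed.

Lemma q_recurrent_sum_lim w :
  filterlim (fun N => pser_sum a (RtoC (q ^ N) * w)%C) eventually (locally (RtoC 1)).
Proof.
  destruct Ha as [Ha0 _]. rewrite <- Ha0.
  apply (geom_sum_pow_scal_lim a K); [exact K_pos | apply q_recurrent_coef_bound | exact Hq].
Qed.

Lemma q_recurrent_functional_eq w : pser_abs_conv a w ->
  (pser_sum a w - pser_sum a (RtoC q * w))%C = (RtoC c * w * pser_sum a (RtoC r * w))%C.
Proof.
  destruct Ha as [Ha0 Hrec]. intros Hw.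
  pose proof (is_series_minus _ _ _ _ (pser_sum_spec a w Hw)
                (pser_sum_spec a _ (pser_abs_conv_scal a q w ltac:(lra) Hw))) as Hdiff.
  pose proof (is_series_scal_l (V := C_NormedModule) (RtoC c * w)%C _ _
                (pser_sum_spec a _ (pser_abs_conv_scal a r w Hr Hw))) as Hshift.
  apply (is_series_C_unique _ _ _ Hdiff).
  (* the constant terms cancel; the recurrence turns the shifted tail into [c w S(r w)] *)
  apply is_series_decr_1.
  match goal with |- is_series _ ?e => replace e with (scal (RtoC c * w)%C (pser_sum a (RtoC r * w))) end.
  2:{ change (RtoC c * w * pser_sum a (RtoC r * w) =
              RtoC c * w * pser_sum a (RtoC r * w) - (pser_term a w 0 - pser_term a (RtoC q * w) 0))%C.
      unfold pser_term. simpl. ring. }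
  eapply is_series_ext; [| exact Hshift]. intros k.
  change (RtoC c * w * pser_term a (RtoC r * w) k = pser_term a w (S k) - pser_term a (RtoC q * w) (S k))%C.
  unfold pser_term. rewrite !Cpow_Cmult, !Cpow_RtoC.
  replace (RtoC (a (S k)) * Cpow w (S k) - RtoC (a (S k)) * (RtoC (q ^ S k) * Cpow w (S k)))%C
    with (RtoC (a (S k) * (1 - q ^ S k)) * Cpow w (S k))%C by (rewrite RtoC_mult, RtoC_minus; ring).
  rewrite Hrec, !RtoC_mult. simpl Cpow. ring.
Qed.

End QRecurrence.

(** * The infinite products *)

Lemma Cprod_ext_lt (f g : nat -> C) N : (forall k, (k < N)%nat -> f k = g k) -> Cprod f N = Cprod g N.
Proof.
  induction N; intros H; simpl; [reflexivity |].
  rewrite IHN by (intros; apply H; lia). rewrite H by lia. reflexivity.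
Qed.

Lemma Cprod_add (f : nat -> C) N M :
  Cprod f (N + M) = (Cprod f N * Cprod (fun k => f (N + k)%nat) M)%C.
Proof.
  induction M; [simpl; rewrite Nat.add_0_r; ring |].
  rewrite Nat.add_succ_r. simpl. rewrite IHM. ring.
Qed.

Lemma Cprod_replace (f : nat -> C) (k0 : nat) (u v : C) N : (k0 < N)%nat -> (u * f k0)%C = v ->
  Cprod (fun k => if Nat.eqb k k0 then v else f k) N = (u * Cprod f N)%C.
Proof.
  intros HN Hv. induction N as [| N IH]; [lia |]. simpl.
  destruct (Nat.eqb N k0) eqn:Ek.
  - apply Nat.eqb_eq in Ek. subst N.
    rewrite (Cprod_ext_lt _ f), <- Hv; [ring |].
    intros k Hk. destruct (Nat.eqb_spec k k0); [lia | reflexivity].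
  - apply Nat.eqb_neq in Ek. rewrite IH by lia. ring.
Qed.

Lemma is_inf_prod_ext (f g : nat -> C) L : (forall k, f k = g k) -> is_inf_prod f L -> is_inf_prod g L.
Proof. intros H. apply filterlim_ext. intros N. apply Cprod_ext_lt. intros k _. apply H. Qed.

Lemma filterlim_C_mult_inv (X Y : nat -> C) (A : C) :
  (forall N, (X N * Y N)%C = A) -> filterlim Y eventually (locally (RtoC 1)) ->
  filterlim X eventually (locally A).
Proof.
  intros HXY HY. apply filterlim_C_eps. intros eps He. rewrite filterlim_C_eps in HY.
  pose proof (Cmod_ge_0 A) as HA.
  destruct (HY (Rmin (/ 2) (eps / (2 * Cmod A + 1)))) as [N HN];
    [apply Rmin_pos; [lra | apply Rdiv_lt_0_compat; lra] |].
  exists N. intros n Hn. specialize (HN n Hn). pose proof (Cmod_ge_0 (Y n - RtoC 1)).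
  assert (H1 : Cmod (Y n - RtoC 1) < / 2) by (eapply Rlt_le_trans; [apply HN | apply Rmin_l]).
  assert (H2 : Cmod (Y n - RtoC 1) * (2 * Cmod A + 1) < eps).
  { assert (Cmod (Y n - RtoC 1) < eps / (2 * Cmod A + 1)) by (eapply Rlt_le_trans; [apply HN | apply Rmin_r]).
    apply (Rmult_lt_compat_r (2 * Cmod A + 1)) in H0; [| lra].
    unfold Rdiv in H0. rewrite Rmult_assoc, Rinv_l in H0; lra. }
  assert (HX : Cmod (X n) <= 2 * Cmod A).
  { pose proof (Cmod_sub_ge' (Y n) (RtoC 1)). rewrite Cmod_1 in H0.
    assert (Cmod (X n) * Cmod (Y n) = Cmod A) by (rewrite <- Cmod_mult, HXY; reflexivity).
    pose proof (Cmod_ge_0 (X n)). nra. }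
  replace (X n - A)%C with (X n * - (Y n - RtoC 1))%C by (rewrite <- (HXY n); ring).
  rewrite Cmod_mult, Cmod_opp. pose proof (Cmod_ge_0 (X n)). nra.
Qed.

Definition recip_factor (c q : R) (z : C) (k : nat) : C := (/ (1 - RtoC (c * q ^ k) * z))%C.

Definition lin_factor (c q : R) (z : C) (k : nat) : C := (1 + RtoC (c * q ^ k) * z)%C.

Lemma RtoC_pow_shift (c q : R) (z : C) N k :
  (RtoC (c * q ^ k) * (RtoC (q ^ N) * z) = RtoC (c * q ^ (N + k)) * z)%C.
Proof. rewrite pow_add, !RtoC_mult. ring. Qed.

Lemma geometric_points_separated (A Q x y : R) (k j : nat) : 0 <= Q < 1 -> 0 <= x -> 0 <= y ->
  A * Q ^ k * x = 1 -> A * Q ^ j * y = 1 -> k <> j -> y * (1 - Q) <= Rabs (x - y).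
Proof.
  intros HQ Hx Hy Hk Hj Hkj.
  (* [x = Q^(j-k) y] if [k < j], [y = Q^(k-j) x] if [j < k] *)
  assert (Hscale : forall u v d i, A * Q ^ i * u = 1 -> A * Q ^ (i + S d) * v = 1 -> u = Q ^ S d * v).
  { intros u v d i Hu Hv. rewrite pow_add in Hv.
    assert (A * Q ^ i <> 0) by (intro E; rewrite E in Hu; lra).
    apply (Rmult_eq_reg_l (A * Q ^ i)); [rewrite Hu, <- Hv; ring | assumption]. }
  destruct (proj1 (Nat.lt_gt_cases k j) Hkj) as [Hlt | Hgt].
  - replace j with (k + S (j - k - 1))%nat in Hj by lia.
    pose proof (Hscale x y _ _ Hk Hj). pose proof (pow_S_le Q (j - k - 1) ltac:(lra)).
    rewrite Rabs_minus_sym, Rabs_pos_eq; nra.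
  - replace k with (j + S (k - j - 1))%nat in Hk by lia.
    pose proof (Hscale y x _ _ Hj Hk). pose proof (pow_S_le Q (k - j - 1) ltac:(lra)).
    pose proof (pow_le Q (S (k - j - 1)) ltac:(lra)).
    set (P := Q ^ S (k - j - 1)) in *. subst y.
    assert (x * (1 - Q) <= x * (1 - P)) by (apply Rmult_le_compat_l; lra).
    assert (P * (x * (1 - Q)) <= x * (1 - Q)) by (rewrite <- (Rmult_1_l (x * (1 - Q))) at 2;
      apply Rmult_le_compat_r; [apply Rmult_le_pos |]; lra).
    rewrite Rabs_pos_eq; nra.
Qed.

Definition recip_pole (c q : R) (z : C) : Prop := exists k, (1 - RtoC (c * q ^ k) * z)%C = 0%C.

Lemma affine_zero_eq (b : R) (z : C) : (1 - RtoC b * z)%C = 0%C -> (RtoC b * z)%C = RtoC 1.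
Proof. intros E. replace (RtoC b * z)%C with (RtoC 1 - (1 - RtoC b * z))%C by ring. rewrite E. ring. Qed.

Lemma affine_zero_modulus (b : R) (z : C) : (1 - RtoC b * z)%C = 0%C -> Rabs b * Cmod z = 1.
Proof.
  intros E. apply affine_zero_eq, (f_equal Cmod) in E. rewrite Cmod_mult, Cmod_R, Cmod_1 in E. exact E.
Qed.

Lemma affine_zero_unique (b : R) (z w : C) : (1 - RtoC b * z)%C = 0%C -> (1 - RtoC b * w)%C = 0%C -> z = w.
Proof.
  intros Ez Ew. pose proof (affine_zero_modulus b w Ew).
  assert (Hb : RtoC b <> 0%C) by (apply RtoC_neq_0; intro E; rewrite E, Rabs_R0 in H; lra).
  apply affine_zero_eq in Ez, Ew.
  replace z with (/ RtoC b * (RtoC b * z))%C by (field; exact Hb).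
  rewrite Ez, <- Ew. field. exact Hb.
Qed.

Lemma recip_factor_residue (b : R) (w z : C) : (1 - RtoC b * w)%C = 0%C -> z <> w ->
  ((z - w) * / (1 - RtoC b * z))%C = RtoC (- / b).
Proof.
  intros Ew Hzw. pose proof (affine_zero_modulus b w Ew).
  assert (Hb : b <> 0) by (intro E; rewrite E, Rabs_R0 in H; lra).
  (* [1 - b z = b (w - z)] because [b w = 1] *)
  replace (1 - RtoC b * z)%C with (RtoC b * (w - z))%C by (rewrite <- (affine_zero_eq b w Ew); ring).
  rewrite RtoC_opp, RtoC_inv by exact Hb. field. split; [apply RtoC_neq_0, Hb |].
  intro E. apply Hzw. replace z with (w - (w - z))%C by ring. rewrite E. ring.
Qed.

Lemma recip_poles_separated (c q : R) (z w : C) k k0 : Rabs q < 1 ->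
  (1 - RtoC (c * q ^ k) * z)%C = 0%C -> (1 - RtoC (c * q ^ k0) * w)%C = 0%C -> k <> k0 ->
  Cmod w * (1 - Rabs q) <= Cmod (z - w).
Proof.
  intros Hq Hz Hw Hk. apply affine_zero_modulus in Hz, Hw. rewrite Rabs_mult, <- RPow_abs in Hz, Hw.
  eapply Rle_trans;
    [apply (geometric_points_separated (Rabs c) (Rabs q) (Cmod z) (Cmod w) k k0);
       try apply Cmod_ge_0; try assumption; split; [apply Rabs_pos | exact Hq] |].
  apply Rabs_le. pose proof (Cmod_sub_ge z w). pose proof (Cmod_sub_ge' z w). lra.
Qed.

Definition recip_prod (c q : R) (z : C) : C :=
  epsilon (inhabits (RtoC 0)) (is_inf_prod (recip_factor c q z)).

Section RecipProduct.

Variables (a : nat -> R) (q c : R).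
Hypothesis Ha : q_recurrent a q c 1.
Hypothesis Hq : Rabs q < 1.

Let rho := geom_radius (q_recurrent_const q c).

Let Rabs_1_le : Rabs 1 <= 1.
Proof. rewrite Rabs_R1. lra. Qed.

Lemma recip_sum_scal w : pser_abs_conv a w ->
  pser_sum a (RtoC q * w)%C = (pser_sum a w * (1 - RtoC c * w))%C.
Proof.
  intros Hw. pose proof (q_recurrent_functional_eq a q c 1 Ha Hq Rabs_1_le w Hw) as H.
  replace (RtoC 1 * w)%C with w in H by ring.
  replace (pser_sum a (RtoC q * w)) with (pser_sum a w - (pser_sum a w - pser_sum a (RtoC q * w)))%C by ring.
  rewrite H. ring.
Qed.

Lemma recip_prod_iter z N : pser_abs_conv a z ->
  (forall k, (k < N)%nat -> (1 - RtoC (c * q ^ k) * z)%C <> 0%C) ->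
  pser_sum a z = (Cprod (recip_factor c q z) N * pser_sum a (RtoC (q ^ N) * z))%C.
Proof.
  intros Hz. induction N as [| N IH]; intros Hk.
  { simpl. replace (RtoC 1 * z)%C with z by ring. ring. }
  rewrite IH by (intros; apply Hk; lia). simpl Cprod. rewrite <- Cmult_assoc. f_equal.
  replace (RtoC (q ^ S N) * z)%C with (RtoC q * (RtoC (q ^ N) * z))%C by (simpl; rewrite RtoC_mult; ring).
  rewrite recip_sum_scal by (apply pser_abs_conv_scal; [apply Rabs_pow_le_1; lra | exact Hz]).
  unfold recip_factor. rewrite RtoC_mult.
  replace (RtoC c * (RtoC (q ^ N) * z))%C with (RtoC c * RtoC (q ^ N) * z)%C by ring.
  field. rewrite <- RtoC_mult. apply Hk. lia.
Qed.

Lemma recip_factor_small_neq_0 w k : Cmod w <= 2 * rho -> (1 - RtoC (c * q ^ k) * w)%C <> 0%C.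
Proof.
  intros Hw. apply Cminus_neq_0_of_Cmod_lt.
  pose proof (q_recurrent_small_factor q c Hq). pose proof (Rabs_pow_le_1 q k ltac:(lra)).
  rewrite Cmod_mult, Cmod_R, Rabs_mult. fold rho in H.
  pose proof (Rabs_pos c). pose proof (Rabs_pos (q ^ k)). pose proof (Cmod_ge_0 w).
  assert (Rabs c * Cmod w <= Rabs c * (2 * rho)) by (apply Rmult_le_compat_l; lra).
  assert (0 <= Rabs c * Cmod w) by (apply Rmult_le_pos; lra). nra.
Qed.

Lemma recip_prod_small w : Cmod w <= 2 * rho -> is_inf_prod (recip_factor c q w) (pser_sum a w).
Proof.
  intros Hw. apply (filterlim_C_mult_inv _ (fun N => pser_sum a (RtoC (q ^ N) * w)%C)).
  - intros N. symmetry. apply recip_prod_iter; [| intros k _; apply recip_factor_small_neq_0, Hw].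
    apply (q_recurrent_abs_conv a q c 1 Ha Hq Rabs_1_le), Hw.
  - apply (q_recurrent_sum_lim a q c 1 Ha Hq Rabs_1_le).
Qed.

Lemma recip_prod_tail z N0 : Cmod (RtoC (q ^ N0) * z)%C <= 2 * rho ->
  is_inf_prod (recip_factor c q z) (Cprod (recip_factor c q z) N0 * pser_sum a (RtoC (q ^ N0) * z))%C.
Proof.
  intros H. apply (filterlim_C_shift _ _ N0).
  eapply filterlim_ext; [| apply filterlim_C_scal, (recip_prod_small _ H)].
  intros M. cbv beta. rewrite Cprod_add. f_equal.
  apply Cprod_ext_lt. intros k _. unfold recip_factor. rewrite RtoC_pow_shift. reflexivity.
Qed.

Lemma recip_prod_eq z N0 : Cmod (RtoC (q ^ N0) * z)%C <= 2 * rho ->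
  recip_prod c q z = (Cprod (recip_factor c q z) N0 * pser_sum a (RtoC (q ^ N0) * z))%C.
Proof.
  intros H. pose proof (recip_prod_tail z N0 H) as HL.
  assert (HP : is_inf_prod (recip_factor c q z) (recip_prod c q z))
    by (unfold recip_prod; apply epsilon_spec; eexists; exact HL).
  exact (filterlim_locally_unique _ _ _ HP HL).
Qed.

Lemma recip_ball_index z0 rad M : exists N, (M <= N)%nat /\
  forall y, Cmod (y - z0) < rad -> Cmod (RtoC (q ^ N) * y)%C < rho.
Proof.
  destruct (pow_scal_eventually_small q (Cmod z0 + rad) rho Hq (q_recurrent_radius_pos q c Hq)) as [N HN].
  exists (N + M)%nat. split; [lia |].
  intros y Hy. apply HN; [lia | apply Cmod_le_center, Hy].
Qed.

Lemma recip_tail_index z : exists N, Cmod (RtoC (q ^ N) * z)%C <= 2 * rho.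
Proof.
  destruct (recip_ball_index z 1 0) as [N [_ HN]]. exists N.
  pose proof (q_recurrent_radius_pos q c Hq). fold rho in H.
  enough (Cmod (RtoC (q ^ N) * z)%C < rho) by lra.
  apply HN. rewrite Cmod_sub_diag. lra.
Qed.

Lemma recip_prod_spec z : is_inf_prod (recip_factor c q z) (recip_prod c q z).
Proof.
  destruct (recip_tail_index z) as [N Hz].
  rewrite (recip_prod_eq z N Hz). apply recip_prod_tail, Hz.
Qed.

Lemma recip_no_pole z k : pser_abs_conv a z -> (1 - RtoC (c * q ^ k) * z)%C <> 0%C.
Proof.
  intros Hz E. set (Y N := pser_sum a (RtoC (q ^ N) * z)%C).
  assert (HY : forall N, Y (S N) = (Y N * (1 - RtoC (c * q ^ N) * z))%C).
  { intros N. unfold Y.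
    replace (RtoC (c * q ^ N) * z)%C with (RtoC c * (RtoC (q ^ N) * z))%C by (rewrite RtoC_mult; ring).
    rewrite <- recip_sum_scal by (apply pser_abs_conv_scal; [apply Rabs_pow_le_1; lra | exact Hz]).
    f_equal. simpl. rewrite RtoC_mult. ring. }
  (* once a factor vanishes, every later [Y N] vanishes, contradicting [Y N --> 1] *)
  assert (HZ : forall j, Y (S k + j)%nat = RtoC 0).
  { induction j; [rewrite Nat.add_0_r, HY, E; ring | rewrite Nat.add_succ_r, HY, IHj; ring]. }
  pose proof (q_recurrent_sum_lim a q c 1 Ha Hq Rabs_1_le z) as L. rewrite filterlim_C_eps in L.
  destruct (L (/ 2)) as [N HN]; [lra |].
  specialize (HN (S k + N)%nat ltac:(lia)). fold (Y (S k + N)%nat) in HN. rewrite HZ in HN.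
  replace (RtoC 0 - RtoC 1)%C with (- RtoC 1)%C in HN by ring. rewrite Cmod_opp, Cmod_1 in HN. lra.
Qed.

Lemma recip_prod_pser z : pser_abs_conv a z -> is_series (pser_term a z) (recip_prod c q z).
Proof.
  intros Hz. destruct (recip_tail_index z) as [N HzN].
  rewrite (recip_prod_eq z N HzN), <- recip_prod_iter; [apply pser_sum_spec, Hz | exact Hz |].
  intros k _. apply recip_no_pole, Hz.
Qed.

Lemma recip_tail_holo N y : Cmod (RtoC (q ^ N) * y)%C < rho ->
  C_holo_at (fun z => pser_sum a (RtoC (q ^ N) * z))%C y.
Proof. intros H. apply C_holo_at_comp_scal, (q_recurrent_sum_holo a q c 1 Ha Hq Rabs_1_le), H. Qed.

Lemma recip_prod_holo z0 : ~ recip_pole c q z0 -> C_holo_at (recip_prod c q) z0.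
Proof.
  intros Hnp. pose proof (q_recurrent_radius_pos q c Hq). fold rho in H.
  destruct (recip_ball_index z0 1 0) as [N [_ HN]].
  apply (C_holo_at_ext_ball (fun z => Cprod (recip_factor c q z) N * pser_sum a (RtoC (q ^ N) * z))%C _ z0 1);
    [lra | intros y Hy; symmetry; apply recip_prod_eq; pose proof (HN y Hy); lra |].
  apply C_holo_at_mult.
  - apply C_holo_at_Cprod. intros k _. apply C_holo_at_inv_affine.
    intro E. apply Hnp. exists k. exact E.
  - apply recip_tail_holo, HN. rewrite Cmod_sub_diag. lra.
Qed.

Lemma recip_prod_pole w : recip_pole c q w ->
  exists r : R, 0 < r /\
    (forall z, 0 < Cmod (z - w) < r -> ~ recip_pole c q z) /\
    exists (m : nat) (g : C -> C),
      (forall z, Cmod (z - w) < r -> C_holo_at g z) /\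
      (forall z, 0 < Cmod (z - w) < r -> g z = (Cpow (z - w) m * recip_prod c q z)%C).
Proof.
  intros [k0 Hk0]. pose proof (q_recurrent_radius_pos q c Hq). fold rho in H.
  pose proof (affine_zero_modulus _ _ Hk0) as Hw.
  set (rad := Cmod w * (1 - Rabs q)).
  assert (Hrad : 0 < rad).
  { apply Rmult_lt_0_compat; [| lra].
    destruct (Rle_lt_or_eq_dec 0 (Cmod w) (Cmod_ge_0 w)) as [Hpos | E]; [exact Hpos |].
    rewrite <- E, Rmult_0_r in Hw. lra. }
  assert (Hsep : forall z k, Cmod (z - w) < rad -> (1 - RtoC (c * q ^ k) * z)%C = 0%C -> k = k0 /\ z = w).
  { intros z k Hz Ez. destruct (Nat.eq_dec k k0) as [-> | Hne].
    - split; [reflexivity | exact (affine_zero_unique _ _ _ Ez Hk0)].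
    - pose proof (recip_poles_separated c q z w k k0 Hq Ez Hk0 Hne). fold rad in H0. lra. }
  exists rad. split; [exact Hrad | split].
  { intros z [Hz0 Hz] [k Ek]. destruct (Hsep z k Hz Ek) as [_ ->].
    rewrite Cmod_sub_diag in Hz0. lra. }
  destruct (recip_ball_index w rad (S k0)) as [N [HkN HN]].
  (* [g z = (z - w) P z]: the [k0]-th factor times [z - w] is the constant [-1/(c q^k0)] *)
  set (g z := (Cprod (fun k => if Nat.eqb k k0 then RtoC (- / (c * q ^ k0)) else recip_factor c q z k) N
                 * pser_sum a (RtoC (q ^ N) * z))%C).
  exists 1%nat, g. split.
  - intros z Hz. apply C_holo_at_mult; [| apply recip_tail_holo, HN, Hz].
    apply C_holo_at_Cprod. intros k _. destruct (Nat.eqb_spec k k0); [apply C_holo_at_const |].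
    apply C_holo_at_inv_affine. intro E. destruct (Hsep z k Hz E). contradiction.
  - intros z [Hz0 Hz]. unfold g.
    rewrite (recip_prod_eq z N) by (pose proof (HN z Hz); lra).
    rewrite (Cprod_replace (recip_factor c q z) k0 (z - w)%C); [simpl; ring | lia |].
    apply recip_factor_residue; [exact Hk0 |].
    intros ->. rewrite Cmod_sub_diag in Hz0. lra.
Qed.

Lemma recip_prod_meromorphic : meromorphic_on_C (recip_prod c q) (recip_pole c q).
Proof. split; [apply recip_prod_holo | apply recip_prod_pole]. Qed.

End RecipProduct.

Section LinProduct.

Variables (a : nat -> R) (q c : R).
Hypothesis Ha : q_recurrent a q c q.
Hypothesis Hq : Rabs q < 1.
Hypothesis Hq0 : q <> 0.
Hypothesis Hc : c <> 0.

Lemma lin_coef_neq_0 n : a n <> 0.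
Proof.
  destruct Ha as [Ha0 Hrec]. induction n as [| n IH]; [rewrite Ha0; lra |].
  intro E. specialize (Hrec n). rewrite E, Rmult_0_l in Hrec.
  symmetry in Hrec. apply Rmult_integral in Hrec as [Hrec | Hrec]; [| exact (pow_nonzero q n Hq0 Hrec)].
  apply Rmult_integral in Hrec as [Hrec | Hrec]; contradiction.
Qed.

Lemma lin_abs_conv z : pser_abs_conv a z.
Proof.
  pose proof (Cmod_ge_0 z). set (x := Cmod z + 1). assert (Hx : 0 < x) by (unfold x; lra).
  apply (pser_abs_conv_le a (RtoC x)); [| rewrite Cmod_R, Rabs_pos_eq; unfold x; lra].
  unfold pser_abs_conv. rewrite Cmod_R, Rabs_pos_eq by lra.
  apply (ex_series_ext (fun n => Rabs (a n * x ^ n)));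
    [intros n; rewrite Rabs_mult, (Rabs_pos_eq (x ^ n)) by (apply pow_le; lra); reflexivity |].
  apply (ex_series_DAlembert _ 0); [lra | intros n; apply Rmult_integral_contrapositive; split;
                                   [apply lin_coef_neq_0 | apply pow_nonzero; lra] |].
  set (L := Rabs c / (1 - Rabs q) * x).
  apply (is_lim_seq_le_le (fun _ => 0) _ (fun n => L * Rabs q ^ n));
    [| apply is_lim_seq_const |].
  - intros n. split; [apply Rabs_pos |].
    pose proof (lin_coef_neq_0 n) as Han. pose proof (q_recurrent_step_bound a q c q Ha Hq n) as Hstep.
    replace (a (S n) * x ^ S n / (a n * x ^ n)) with (a (S n) / a n * x)
      by (simpl; field; split; [apply pow_nonzero |]; lra).
    rewrite Rabs_mult, Rabs_div, (Rabs_pos_eq x) by lra.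
    assert (Hpos : 0 < Rabs (a n)) by (apply Rabs_pos_lt; exact Han).
    apply (Rmult_le_reg_r (Rabs (a n))); [exact Hpos |].
    unfold L.
    replace (Rabs (a (S n)) / Rabs (a n) * x * Rabs (a n)) with (Rabs (a (S n)) * x) by (field; lra).
    replace (Rabs c / (1 - Rabs q) * x * Rabs q ^ n * Rabs (a n))
      with (Rabs c / (1 - Rabs q) * Rabs (a n) * Rabs q ^ n * x) by ring.
    apply Rmult_le_compat_r; lra.
  - replace (Finite 0) with (Rbar_mult L 0) by (simpl; f_equal; ring).
    apply is_lim_seq_scal_l, is_lim_seq_geom. rewrite Rabs_Rabsolu. exact Hq.
Qed.

Lemma lin_prod_iter z N : pser_sum a z = (Cprod (lin_factor c q z) N * pser_sum a (RtoC (q ^ N) * z))%C.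
Proof.
  induction N as [| N IH]; [simpl; replace (RtoC 1 * z)%C with z by ring; ring |].
  rewrite IH. simpl Cprod. rewrite <- Cmult_assoc. f_equal.
  set (w := (RtoC (q ^ N) * z)%C).
  pose proof (q_recurrent_functional_eq a q c q Ha Hq ltac:(lra) w (lin_abs_conv w)) as Hfe.
  replace (RtoC (q ^ S N) * z)%C with (RtoC q * w)%C by (unfold w; simpl; rewrite RtoC_mult; ring).
  unfold lin_factor. fold w. rewrite RtoC_mult.
  replace (pser_sum a w) with (pser_sum a w - pser_sum a (RtoC q * w) + pser_sum a (RtoC q * w))%C by ring.
  rewrite Hfe. unfold w. ring.
Qed.

Lemma lin_prod z : is_inf_prod (lin_factor c q z) (pser_sum a z).
Proof.
  apply (filterlim_C_mult_inv _ (fun N => pser_sum a (RtoC (q ^ N) * z)%C));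
    [intros N; symmetry; apply lin_prod_iter |].
  apply (q_recurrent_sum_lim a q c q Ha Hq). lra.
Qed.

End LinProduct.

(** * Generalized Fibonacci polynomials *)

Lemma q_recurrent_of_binet (a f : nat -> R) (p u v : R) : u <> 0 -> a 0%nat = 1 ->
  (forall n, f (S n) * (u - v) = u ^ S n - v ^ S n) ->
  (forall n, a (S n) * f (S n) = p ^ n * a n) ->
  q_recurrent a (v / u) (1 - v / u) (p / u).
Proof.
  intros Hu Ha0 Hf Ha. split; [exact Ha0 |]. intros n.
  assert (Hun : u ^ S n <> 0) by (apply pow_nonzero, Hu).
  unfold Rdiv. rewrite !Rpow_mult_distr, !pow_inv.
  apply (Rmult_eq_reg_r (u ^ S n)); [| exact Hun].
  replace (a (S n) * (1 - v ^ S n * / u ^ S n) * u ^ S n) with (a (S n) * f (S n) * (u - v))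
    by (rewrite Rmult_assoc, Hf; field; exact Hun).
  rewrite Ha. simpl. field. split; [apply pow_nonzero |]; exact Hu.
Qed.

Lemma pow_S_lt_compat (x y : R) n : 0 <= x < y -> x ^ S n < y ^ S n.
Proof.
  intros H. induction n; [simpl; lra |].
  change (x * x ^ S n < y * y ^ S n). apply Rmult_le_0_lt_compat; try lra. apply pow_le; lra.
Qed.

Section Fibonacci.

Variables (s t : R).
Hypothesis hs : s <> 0.
Hypothesis ht : t <> 0.
Hypothesis hD : 0 < s ^ 2 + 4 * t.

Let p := phi s t.
Let p' := phi' s t.

Lemma phi_sub : p - p' = sqrt (s ^ 2 + 4 * t).
Proof. unfold p, p', phi, phi'. field. Qed.

Lemma phi_sub_pos : 0 < p - p'.
Proof. rewrite phi_sub. apply sqrt_lt_R0, hD. Qed.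

Lemma phi_add : p + p' = s.
Proof. unfold p, p', phi, phi'. field. Qed.

Lemma phi_mult : p * p' = - t.
Proof.
  unfold p, p', phi, phi'. pose proof (sqrt_sqrt (s ^ 2 + 4 * t) ltac:(lra)). nra.
Qed.

Lemma phi_neq_0 : p <> 0.
Proof. intro E. pose proof phi_mult. rewrite E in H. lra. Qed.

Lemma phi'_neq_0 : p' <> 0.
Proof. intro E. pose proof phi_mult. rewrite E in H. lra. Qed.

Lemma fibst_binet n : fibst s t n * (p - p') = p ^ n - p' ^ n.
Proof.
  pose proof phi_add. pose proof phi_mult.
  assert (Hp : p ^ 2 = s * p + t) by (rewrite <- H; replace t with (- (p * p')) by lra; ring).
  assert (Hp' : p' ^ 2 = s * p' + t) by (rewrite <- H; replace t with (- (p * p')) by lra; ring).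
  enough (Hpair : fibst s t n * (p - p') = p ^ n - p' ^ n /\
                  fibst s t (S n) * (p - p') = p ^ S n - p' ^ S n) by apply Hpair.
  induction n as [| n [IH1 IH2]]; [simpl; split; ring | split; [exact IH2 |]].
  change (fibst s t (S (S n))) with (s * fibst s t (S n) + t * fibst s t n).
  replace ((s * fibst s t (S n) + t * fibst s t n) * (p - p'))
    with (s * (fibst s t (S n) * (p - p')) + t * (fibst s t n * (p - p'))) by ring.
  rewrite IH1, IH2.
  replace (p ^ S (S n)) with (p ^ n * p ^ 2) by (simpl; ring).
  replace (p' ^ S (S n)) with (p' ^ n * p' ^ 2) by (simpl; ring).
  rewrite Hp, Hp'. simpl. ring.
Qed.

Lemma fibst_S_neq_0 n : fibst s t (S n) <> 0.
Proof.
  (* [|p| <> |p'|], since [p + p' = s <> 0] and [p - p' > 0] *)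
  assert (Habs : Rabs p <> Rabs p').
  { pose proof phi_sub_pos. pose proof phi_add. intro E.
    assert (Hsq : (p - p') * (p + p') = 0).
    { enough (p ^ 2 = p' ^ 2) by nra. rewrite <- (pow2_abs p), <- (pow2_abs p'), E. reflexivity. }
    apply Rmult_integral in Hsq as [Hsq | Hsq]; lra. }
  intro E. pose proof (fibst_binet (S n)). rewrite E, Rmult_0_l in H.
  assert (Rabs p ^ S n = Rabs p' ^ S n) by (rewrite !RPow_abs; f_equal; lra).
  destruct (Rtotal_order (Rabs p) (Rabs p')) as [Hlt | [Heq | Hgt]]; [| contradiction |].
  - pose proof (Rabs_pos p). pose proof (pow_S_lt_compat (Rabs p) (Rabs p') n ltac:(lra)). lra.
  - pose proof (Rabs_pos p'). pose proof (pow_S_lt_compat (Rabs p') (Rabs p) n ltac:(lra)). lra.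
Qed.

Lemma fibotorial_neq_0 n : fibotorial s t n <> 0.
Proof.
  induction n; simpl; [lra |]. apply Rmult_integral_contrapositive. split; [exact IHn | apply fibst_S_neq_0].
Qed.

Lemma Exp_coef_0 : Exp_coef s t 0 = 1.
Proof. unfold Exp_coef. simpl. field. Qed.

Lemma Exp_coef_succ n : Exp_coef s t (S n) * fibst s t (S n) = p ^ n * Exp_coef s t n.
Proof.
  unfold Exp_coef.
  assert (Ebin : (S n * (S n - 1) / 2 = n * (n - 1) / 2 + n)%nat).
  { replace (S n - 1)%nat with n by lia. rewrite <- Nat.div_add by lia. f_equal. destruct n; simpl; lia. }
  rewrite Ebin, pow_add. change (fibotorial s t (S n)) with (fibotorial s t n * fibst s t (S n)). fold p.
  pose proof (fibotorial_neq_0 n). pose proof (fibst_S_neq_0 n). field. split; assumption.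
Qed.

Lemma Exp_coef_q_recurrent_phi : q_recurrent (Exp_coef s t) (p' / p) (1 - p' / p) 1.
Proof.
  pose proof (q_recurrent_of_binet _ (fibst s t) p p p' phi_neq_0 Exp_coef_0
                (fun n => fibst_binet (S n)) Exp_coef_succ) as H.
  replace (p / p) with 1 in H by (field; apply phi_neq_0). exact H.
Qed.

Lemma Exp_coef_q_recurrent_phi' : q_recurrent (Exp_coef s t) (p / p') (1 - p / p') (p / p').
Proof.
  apply (q_recurrent_of_binet _ (fibst s t)); [apply phi'_neq_0 | apply Exp_coef_0 | | apply Exp_coef_succ].
  intros n. replace (p' - p) with (- (p - p')) by ring. rewrite <- Ropp_mult_distr_r, fibst_binet. ring.
Qed.

Lemma denom1_factor z k :
  denom1 s t z k = (RtoC (p ^ S k) * (1 - RtoC ((1 - p' / p) * (p' / p) ^ k) * z))%C.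
Proof.
  pose proof phi_neq_0. unfold denom1. fold p p'.
  replace ((p - p') * p' ^ k) with (p ^ S k * ((1 - p' / p) * (p' / p) ^ k))
    by (unfold Rdiv; rewrite Rpow_mult_distr, pow_inv; simpl; field; split; [apply pow_nonzero |]; exact H).
  rewrite RtoC_mult. ring.
Qed.

Lemma factor1_recip z k : factor1 s t z k = recip_factor (1 - p' / p) (p' / p) z k.
Proof.
  assert (Hp : RtoC (p ^ S k) <> 0%C) by apply RtoC_neq_0, pow_nonzero, phi_neq_0.
  unfold factor1, recip_factor, Cdiv. rewrite denom1_factor. fold p.
  (* both sides are [0] at a pole, by the convention [/ 0 = 0] *)
  destruct (classic ((1 - RtoC ((1 - p' / p) * (p' / p) ^ k) * z)%C = 0%C)) as [E | E].
  - rewrite E, Cmult_0_r, Cinv_0. ring.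
  - field. split; assumption.
Qed.

Lemma factor2_lin z k : factor2 s t z k = lin_factor (1 - p / p') (p / p') z k.
Proof.
  pose proof phi'_neq_0. unfold factor2, lin_factor. fold p p'.
  replace ((p - p') * (p ^ k / p' ^ S k)) with (- ((1 - p / p') * (p / p') ^ k))
    by (unfold Rdiv; rewrite Rpow_mult_distr, pow_inv; simpl; field; split; [apply pow_nonzero |]; exact H).
  rewrite RtoC_opp. ring.
Qed.

Lemma poles1_recip z : poles1 s t z <-> recip_pole (1 - p' / p) (p' / p) z.
Proof.
  assert (Hp : forall k, RtoC (p ^ S k) <> 0%C) by (intros; apply RtoC_neq_0, pow_nonzero, phi_neq_0).
  unfold poles1, recip_pole. setoid_rewrite denom1_factor.
  split; intros [k Hk]; exists k; [| rewrite Hk; ring].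
  destruct (classic ((1 - RtoC ((1 - p' / p) * (p' / p) ^ k) * z)%C = 0%C)) as [E | E]; [exact E |].
  exfalso. exact (Cmult_neq_0 _ _ (Hp k) E Hk).
Qed.

Lemma phi_ratio_abs_lt_1 : 1 < Rabs (p' / p) -> Rabs (p / p') < 1.
Proof.
  pose proof phi_neq_0. pose proof phi'_neq_0. intros Hq.
  replace (p / p') with (/ (p' / p)) by (field; split; assumption).
  rewrite Rabs_inv. rewrite <- Rinv_1. apply Rinv_lt_contravar; lra.
Qed.

Lemma phi_ratio_neq_0 : p / p' <> 0.
Proof.
  unfold Rdiv. apply Rmult_integral_contrapositive.
  split; [apply phi_neq_0 | apply Rinv_neq_0_compat, phi'_neq_0].
Qed.

Lemma one_sub_phi_ratio_neq_0 : 1 - p / p' <> 0.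
Proof.
  pose proof phi'_neq_0. pose proof phi_sub_pos. intro E.
  assert (p = p') by (apply (Rmult_eq_reg_r (/ p')); [| apply Rinv_neq_0_compat; exact H];
                      rewrite Rinv_r by exact H; unfold Rdiv in E; lra).
  lra.
Qed.

End Fibonacci.


Lemma meromorphic_on_C_poles_iff (P : C -> C) (Z1 Z2 : C -> Prop) :
  (forall z, Z1 z <-> Z2 z) -> meromorphic_on_C P Z1 -> meromorphic_on_C P Z2.
Proof.
  intros HZ [Hholo Hpole]. split.
  - intros z Hz. apply Hholo. rewrite HZ. exact Hz.
  - intros w Hw. apply HZ in Hw. destruct (Hpole w Hw) as [r [Hr [Hiso Hg]]].
    exists r. split; [exact Hr | split; [| exact Hg]].
    intros z Hz. rewrite <- HZ. apply Hiso, Hz.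
Qed.

Theorem mainTheorem9 (s t : R) (hs : s <> 0) (ht : t <> 0) (hD : 0 < s ^ 2 + 4 * t) :
  let q := phi' s t / phi s t in
  (Rabs q < 1 ->
     exists P : C -> C,
       (forall z, ~ poles1 s t z -> is_inf_prod (factor1 s t z) (P z)) /\
       meromorphic_on_C P (poles1 s t) /\
       (forall z, in_disk_of_conv (Exp_coef s t) z ->
          ~ poles1 s t z /\ is_series (Exp_term s t z) (P z))) /\
  (1 < Rabs q ->
     forall z : C, exists L : C,
       is_series (Exp_term s t z) L /\ is_inf_prod (factor2 s t z) L).
Proof.
  intros q. split.
  - intros Hq. pose proof (Exp_coef_q_recurrent_phi s t hs ht hD) as Hrec.
    exists (recip_prod (1 - q) q). split; [| split].
    + intros z _. apply (is_inf_prod_ext (recip_factor (1 - q) q z));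
        [intros k; symmetry; apply factor1_recip; assumption | exact (recip_prod_spec _ _ _ Hrec Hq z)].
    + apply (meromorphic_on_C_poles_iff _ (recip_pole (1 - q) q));
        [intros z; symmetry; apply poles1_recip; assumption | exact (recip_prod_meromorphic _ _ _ Hrec Hq)].
    + intros z Hz. apply pser_abs_conv_in_disk in Hz. split.
      * rewrite poles1_recip by assumption. intros [k Hk]. exact (recip_no_pole _ _ _ Hrec Hq z k Hz Hk).
      * exact (recip_prod_pser _ _ _ Hrec Hq z Hz).
  - intros Hq z. pose proof (Exp_coef_q_recurrent_phi' s t hs ht hD) as Hrec.
    pose proof (phi_ratio_abs_lt_1 s t ht hD Hq) as Hq'.
    pose proof (phi_ratio_neq_0 s t ht hD) as Hq0. pose proof (one_sub_phi_ratio_neq_0 s t ht hD) as Hc.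
    exists (pser_sum (Exp_coef s t) z). split.
    + exact (pser_sum_spec _ _ (lin_abs_conv _ _ _ Hrec Hq' Hq0 Hc z)).
    + apply (is_inf_prod_ext (lin_factor (1 - phi s t / phi' s t) (phi s t / phi' s t) z));
        [intros k; symmetry; apply factor2_lin; assumption | exact (lin_prod _ _ _ Hrec Hq' Hq0 Hc z)].
Qed.
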